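(* Let $Q$ be a quadrilateral in $K^2$ in standard form with centroid $(h,k)$ and coefficient $\mu$. (1) A line $\ell$ is a bisector of $Q$ with midpoint $(p,q)\neq(0,0)$ if and only if $q(q-2k)-\mu p(p-2h)=0$ and $\ell$ has equation $qX+pY-2pq=0$. (2) If $(h,k)=(0,0)$, every line through $(0,0)$ is a bisector of $Q$ with midpoint $(0,0)$. (3) If $(h,k)\neq(0,0)$, then the unique bisector of $Q$ whose midpoint is $(0,0)$ is the line $kY+\mu hX=0$.
   Context: $K$ is a field of characteristic $\neq 2$; we work in $K^2$ inside the projective plane. A quadrilateral $Q=ABA'B'$ consists of four distinct lines $A,B,A',B'$ (sides), not all through one point, with adjacent sides ($A,B$; $B,A'$; $A',B'$; $B',A$) not parallel; opposite sides may be parallel. Vertices: $A\cap B$, $B\cap A'$, $A'\cap B'$, $B'\cap A$ (two may coincide if three sides are concurrent). The centroid is the average of the four vertices (equivalently the midpoint of the midpoints of the diagonals). $Q$ is in standard form if $A$ is the line $Y=0$ and $A'$ is the line $X=0$; then $B$ and $B'$ are neither horizontal nor vertical, and the coefficient of $Q$ is $\mu=t_Bt_{B'}$, the product of the slopes of $B$ and $B'$. A line $\ell$ crosses a pair $\{\ell_1,\ell_2\}$ if it is distinct from both and not parallel to both; $\mathrm{mid}_{\{\ell_1,\ell_2\}}(\ell)$ is the midpoint of the points where $\ell$ meets $\ell_1,\ell_2$ (the point at infinity of $\ell$ if one of them is at infinity). $\ell$ bisects $Q$ (is a bisector) if $\mathrm{mid}_{\mathsf P}(\ell)$ is the same for all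 pairs $\mathsf P$ among $\{A,A'\},\{B,B'\}$ that $\ell$ crosses; this common point is the midpoint of the bisector. *)

From HB Require Import structures.
From mathcomp Require Import all_boot all_algebra.
Set Implicit Arguments. Unset Strict Implicit. Unset Printing Implicit Defensive.
Import GRing.Theory.
Local Open Scope ring_scope.

Section Geo.
Variable K : fieldType.

Definition point := (K * K)%type.

Record line := Line { la : K; lb : K; lc : K; line_nd : (la != 0) || (lb != 0) }.

Definition on_line (l : line) (P : point) : bool :=
  la l * P.1 + lb l * P.2 + lc l == 0.

Definition same_line (l m : line) : Prop := forall P, on_line l P = on_line m P.

(* parallel: same direction (equal lines count as parallel) *)
Definition parallel (l m : line) : bool := la l * lb m == la m * lb l.

Definition slope (l : line) : K := - (la l / lb l).

Definition midpt (P1 P2 : point) : point :=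
  ((P1.1 + P2.1) / 2%:R, (P1.2 + P2.2) / 2%:R).

Definition crosses (l l1 l2 : line) : Prop :=
  ~ same_line l l1 /\ ~ same_line l l2 /\ ~ (parallel l l1 /\ parallel l l2).

(* mid_{l1,l2}(l) = m, where m : option point and [None] stands for the point
   at infinity of l (used when l meets l1 or l2 at infinity) *)
Definition mid_pair (l l1 l2 : line) (m : option point) : Prop :=
  if parallel l l1 || parallel l l2 then m = None
  else exists P1 P2 : point,
    [/\ on_line l P1, on_line l1 P1, on_line l P2, on_line l2 P2
      & m = Some (midpt P1 P2)].

Definition is_quad (A B A' B' : line) : Prop :=
  [/\ ~ same_line A B, ~ same_line A A', ~ same_line A B',
      ~ same_line B A' & ~ same_line B B'] /\ ~ same_line A' B' /\
  ~ (exists P, [/\ on_line A P, on_line B P, on_line A' P & on_line B' P]) /\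
  [/\ ~~ parallel A B, ~~ parallel B A', ~~ parallel A' B'
     & ~~ parallel B' A].

Definition standard_form (A B A' B' : line) : Prop :=
  (forall P : point, on_line A P = (P.2 == 0)) /\
  (forall P : point, on_line A' P = (P.1 == 0)).

Definition centroid (A B A' B' : line) (G : point) : Prop :=
  exists V1 V2 V3 V4 : point,
    [/\ on_line A V1 /\ on_line B V1, on_line B V2 /\ on_line A' V2,
        on_line A' V3 /\ on_line B' V3, on_line B' V4 /\ on_line A V4
      & G = ((V1.1 + V2.1 + V3.1 + V4.1) / 4%:R,
             (V1.2 + V2.2 + V3.2 + V4.2) / 4%:R)].

Definition bisector_mid (A B A' B' l : line) (m : option point) : Prop :=
  [/\ crosses l A A' \/ crosses l B B',
      crosses l A A' -> mid_pair l A A' m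
    & crosses l B B' -> mid_pair l B B' m].

End Geo.

(* A line meeting the axes at (2p, 0) and (0, 2q) has {A, A'}-midpoint (p, q) and equation
   qX + pY - 2pq = 0; conversely every bisector with midpoint (p, q) passes through these two
   points (if it is A or A', because its {B, B'}-midpoint lies on it).  For such a line the
   {B, B'}-midpoint is (p, q) + t (p, -q), where t is a nonzero multiple of
   C(p, q) = q (q - 2k) - mu p (p - 2h), so the two midpoints agree exactly when C(p, q) = 0.
   Writing B : aX + bY + c = 0 and B' : a'X + b'Y + c' = 0, the identity
     2 b b' C(p, q) = (2bq + c) (qb' - a'p) + (qb - ap) (2a'p + c')
   shows that if the line is parallel to B then C(p, q) = 0 forces it to be B or to be parallel
   to B' too, i.e. not to cross {B, B'}.  A line aX + bY = 0 through the origin has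
   {B, B'}-midpoint proportional to (b, -a), with factor a nonzero multiple of mu h b - k a;
   this gives (2) and (3). *)

From mathcomp Require Import all_boot all_algebra ring.
From Stdlib Require Import Classical.
Import GRing.Theory.
Local Open Scope ring_scope.
Set Implicit Arguments. Unset Strict Implicit. Unset Printing Implicit Defensive.

Ltac field_nz :=
  field; do ?[apply/andP; split]; rewrite ?oppr_eq0 ?invr_eq0;
  do ?apply: mulf_neq0; assumption.

Section Lines.
Variable K : fieldType.
Implicit Types (l m : line K) (P : point K) (a b c p q : K).

Lemma four_neq0 : (2%:R : K) != 0 -> (4%:R : K) != 0.
Proof. by move=> two_neq0; rewrite (natrM K 2 2) mulf_neq0. Qed.

Lemma pair_neq0 a b : ((a, b) != (0, 0)) = (a != 0) || (b != 0).
Proof. by rewrite xpair_eqE negb_and. Qed.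

Lemma mulf_pair_eq0 a b c : (a != 0) || (b != 0) -> (a * c == 0) && (b * c == 0) = (c == 0).
Proof.
rewrite -negb_and => /negbTE ab0.
by rewrite !mulf_eq0; case: (c == 0); rewrite ?orbT ?orbF.
Qed.

Lemma addr_pair_eq a b c d t : (c != 0) || (d != 0) ->
  ((a + c * t, b + d * t) == (a, b)) = (t == 0).
Proof.
move=> cd0; rewrite xpair_eqE -{2}[a]addr0 -{2}[b]addr0 !(inj_eq (addrI _)).
exact: mulf_pair_eq0.
Qed.

Lemma proportional_pair a b c d : (a != 0) || (b != 0) -> (c != 0) || (d != 0) ->
  c * b = d * a -> exists2 r : K, r != 0 & c = r * a /\ d = r * b.
Proof.
case: (eqVneq a 0) => [-> /= b0 | a0 _] cd0 e.
  have c0 : c = 0 by apply/eqP; rewrite -(mulIr_eq0 _ (mulIf b0)) e mulr0.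
  exists (d / b); last by rewrite c0 mulr0 divfK.
  by rewrite mulf_neq0 ?invr_eq0 //; move: cd0; rewrite c0 eqxx.
have d_eq : d = c / a * b by rewrite mulrAC e mulfK.
have c0 : c != 0 by apply: contraTneq cd0 => c0; rewrite d_eq c0 !mul0r eqxx.
by exists (c / a); rewrite ?mulf_neq0 ?invr_eq0 ?divfK.
Qed.

Lemma on_line_x_axis l x : la l != 0 -> on_line l (x, 0) -> x = - lc l / la l.
Proof.
move=> a0; rewrite /on_line /= mulr0 addr0 addr_eq0 => /eqP e.
by apply: (mulfI a0); rewrite e [RHS]mulrC divfK.
Qed.

Lemma on_line_y_axis l y : lb l != 0 -> on_line l (0, y) -> y = - lc l / lb l.
Proof.
move=> b0; rewrite /on_line /= mulr0 add0r addr_eq0 => /eqP e.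
by apply: (mulfI b0); rewrite e [RHS]mulrC divfK.
Qed.

Lemma slope_neq0 l : la l != 0 -> lb l != 0 -> slope l != 0.
Proof. by move=> a0 b0; rewrite oppr_eq0 mulf_neq0 ?invr_eq0. Qed.

Definition ldet l m := la l * lb m - la m * lb l.

Definition meet l m : point K :=
  ((lb l * lc m - lb m * lc l) / ldet l m, (la m * lc l - la l * lc m) / ldet l m).

Lemma parallelE l m : parallel l m = (ldet l m == 0).
Proof. by rewrite /parallel /ldet subr_eq0. Qed.

Lemma meet_on l m : ldet l m != 0 -> on_line l (meet l m) /\ on_line m (meet l m).
Proof. by rewrite /on_line /meet /ldet /= => d; split; apply/eqP; field_nz. Qed.

Lemma meet_uniq l m P : ldet l m != 0 -> on_line l P -> on_line m P -> P = meet l m.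
Proof.
case: P => x y d; rewrite /on_line /= => + +.
rewrite addrC addr_eq0 => /eqP el; rewrite addrC addr_eq0 => /eqP em.
by rewrite /meet el em; congr pair; apply: (mulIf d); rewrite divfK // /ldet; ring.
Qed.

Lemma mid_pairE l l1 l2 M : mid_pair l l1 l2 (Some M) <->
  [/\ ldet l l1 != 0, ldet l l2 != 0 & M = midpt (meet l l1) (meet l l2)].
Proof.
rewrite /mid_pair !parallelE.
have [d1|d1] /= := eqVneq (ldet l l1) 0; first by split=> // -[].
have [d2|d2] /= := eqVneq (ldet l l2) 0; first by split=> // -[].
split=> [[P1 [P2 [o1 o1' o2 o2' [->]]]] | [_ _ ->]].
  by rewrite -(meet_uniq d1 o1 o1') -(meet_uniq d2 o2 o2').
have [o1 o1'] := meet_on d1; have [o2 o2'] := meet_on d2.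
by exists (meet l l1), (meet l l2).
Qed.

Lemma mid_pair_on l l1 l2 M : (2%:R : K) != 0 ->
  mid_pair l l1 l2 (Some M) -> on_line l M.
Proof.
move=> two_neq0; rewrite /mid_pair; case: ifP => // _ [[x1 y1] [[x2 y2] [o1 _ o2 _ [->]]]].
move: o1 o2; rewrite /on_line /midpt /= => /eqP o1 /eqP o2; apply/eqP.
have -> : la l * ((x1 + x2) / 2%:R) + lb l * ((y1 + y2) / 2%:R) + lc l
  = ((la l * x1 + lb l * y1 + lc l) + (la l * x2 + lb l * y2 + lc l)) / 2%:R by field.
by rewrite o1 o2 addr0 mul0r.
Qed.

Lemma exists_on_line l : exists P, on_line l P.
Proof.
case: (eqVneq (la l) 0) => ha.
  have hb : lb l != 0 by move: (line_nd l); rewrite ha eqxx.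
  by exists (0, - lc l / lb l); rewrite /on_line /=; apply/eqP; field.
by exists (- lc l / la l, 0); rewrite /on_line /=; apply/eqP; field.
Qed.

Lemma parallel_common_coef l m P : ldet l m = 0 -> on_line l P -> on_line m P ->
  exists2 r : K, r != 0 & [/\ la m = r * la l, lb m = r * lb l & lc m = r * lc l].
Proof.
move=> /eqP; rewrite /ldet subr_eq0 => /eqP d /eqP ol /eqP om.
have [r r0 [ea eb]] : exists2 r : K, r != 0 & la m = r * la l /\ lb m = r * lb l.
  by apply: proportional_pair (line_nd l) (line_nd m) _; rewrite -d mulrC.
exists r => //; split=> //; apply/eqP; rewrite -subr_eq0.
have -> : lc m - r * lc l = la m * P.1 + lb m * P.2 + lc m - r * (la l * P.1 + lb l * P.2 + lc l).
  by rewrite ea eb; ring.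
by rewrite ol om mulr0 subrr.
Qed.

Lemma same_lineE l m : same_line l m <->
  exists2 r : K, r != 0 & [/\ la m = r * la l, lb m = r * lb l & lc m = r * lc l].
Proof.
split=> [same | [r r0 [ea eb ec]] P]; last first.
  by rewrite /on_line ea eb ec -!mulrA -!mulrDr mulf_eq0 (negbTE r0).
have [[x y] o] := exists_on_line l.
have o' : on_line l (x - lb l, y + la l).
  by move: o; rewrite /on_line /= => /eqP o; apply/eqP; rewrite -o; ring.
apply: (parallel_common_coef _ o); last by rewrite -same.
move: o o'; rewrite !same /on_line /= => /eqP om /eqP om'.
have -> : ldet l m = la m * (x - lb l) + lb m * (y + la l) + lc m - (la m * x + lb m * y + lc m).
  by rewrite /ldet; ring.
by rewrite om om' subrr.
Qed.

Lemma line_eqnP l a b c (ab0 : (a != 0) || (b != 0)) :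
  (forall P, on_line l P = (a * P.1 + b * P.2 + c == 0)) <->
  exists2 r : K, r != 0 & [/\ a = r * la l, b = r * lb l & c = r * lc l].
Proof. exact: (same_lineE l (Line c ab0)). Qed.

Lemma same_line_ldet l m : same_line l m -> ldet l m = 0.
Proof. by case/same_lineE=> r _ [ea eb _]; rewrite /ldet ea eb; ring. Qed.

Lemma not_crosses l l1 l2 : ~ crosses l l1 l2 ->
  [\/ same_line l l1, same_line l l2 | parallel l l1 /\ parallel l l2].
Proof.
move=> nc; apply: NNPP => H; apply: nc.
by split; [|split] => ?; apply: H; [apply: Or31 | apply: Or32 | apply: Or33].
Qed.

Lemma line_through0P l a b : (a != 0) || (b != 0) ->
  (lc l = 0 /\ a * lb l = b * la l) <-> (forall P, on_line l P = (a * P.1 + b * P.2 == 0)).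
Proof.
move=> ab0; split=> [[c0 e] P | H].
  rewrite -[a * _ + _]addr0; move: P; apply/(line_eqnP _ _ ab0).
  have [r r0 [ea eb]] := proportional_pair (line_nd l) ab0 e.
  by exists r; rewrite ?c0 ?mulr0.
have /(line_eqnP _ _ ab0) [r r0 [ea eb ec]] :
  forall P, on_line l P = (a * P.1 + b * P.2 + 0 == 0) by move=> P; rewrite addr0.
by split; [apply: (mulfI r0); rewrite -ec mulr0 | rewrite ea eb; ring].
Qed.

Definition axes_line l p q :=
  forall P, on_line l P = (q * P.1 + p * P.2 - 2%:R * p * q == 0).

Lemma axes_lineP l p q : (2%:R : K) != 0 -> (p, q) != (0, 0) ->
  axes_line l p q <-> on_line l (2%:R * p, 0) /\ on_line l (0, 2%:R * q).
Proof.
move=> two_neq0 pq0; split=> [hl | [o1 o2]].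
  by rewrite !hl /=; split; apply/eqP; ring.
have qp0 : (q != 0) || (p != 0) by rewrite orbC -pair_neq0.
apply/(line_eqnP _ _ qp0).
have [r r0 [qE pE]] : exists2 r : K, r != 0 & q = r * la l /\ p = r * lb l.
  apply: proportional_pair (line_nd l) qp0 _; apply/eqP; rewrite -subr_eq0.
  have : 2%:R * (q * lb l - p * la l) = (la l * 0 + lb l * (2%:R * q) + lc l)
                                      - (la l * (2%:R * p) + lb l * 0 + lc l) by ring.
  by rewrite (eqP o1) (eqP o2) subrr => /eqP; rewrite mulf_eq0 (negbTE two_neq0).
exists r => //; split=> //.
by move: o1; rewrite /on_line /= mulr0 addr0 addrC addr_eq0 => /eqP ->; rewrite qE; ring.
Qed.

Lemma axes_line_coef l p q : (p, q) != (0, 0) -> axes_line l p q ->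
  exists2 r : K, r != 0 & [/\ p = r * lb l, q = r * la l & lc l = - (2%:R * r * la l * lb l)].
Proof.
rewrite pair_neq0 orbC => qp0 /(line_eqnP _ _ qp0) [r r0 [qE pE cE]].
by exists r => //; split=> //; apply: (mulfI r0); rewrite -cE qE pE; ring.
Qed.

Lemma ldet_axes l m p q : (p, q) != (0, 0) -> axes_line l p q ->
  (ldet l m == 0) = (q * lb m == la m * p).
Proof.
move=> pq0 /(axes_line_coef pq0) [r r0 [-> -> _]].
rewrite -[RHS]subr_eq0 (_ : _ - _ = r * ldet l m) ?mulf_eq0 ?(negbTE r0) // /ldet; ring.
Qed.

Lemma axes_line_parallel l p q : (2%:R : K) != 0 -> (p, q) != (0, 0) ->
  q * lb l = la l * p -> on_line l (0, 2%:R * q) -> axes_line l p q.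
Proof.
move=> two_neq0 pq0 par o2; apply/axes_lineP => //; split=> //.
rewrite /on_line /= in o2 *.
rewrite (_ : _ + _ + _ = (la l * 0 + lb l * (2%:R * q) + lc l) + 2%:R * (la l * p - q * lb l)).
  by rewrite (eqP o2) par subrr mulr0 addr0.
by ring.
Qed.

Lemma midpt_meet_origin l l1 l2 : (2%:R : K) != 0 ->
  lc l = 0 -> ldet l l1 != 0 -> ldet l l2 != 0 ->
  (midpt (meet l l1) (meet l l2) == (0, 0)) =
  (lc l1 * ldet l l2 + lc l2 * ldet l l1 == 0).
Proof.
move=> two_neq0 c0 d1 d2.
set t := (lc l1 * ldet l l2 + lc l2 * ldet l l1) / (2%:R * ldet l l1 * ldet l l2).
have -> : midpt (meet l l1) (meet l l2) = (lb l * t, - la l * t).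
  by rewrite /midpt /meet /t c0 /=; congr pair; field_nz.
have nd : (lb l != 0) || (- la l != 0) by rewrite oppr_eq0 orbC; exact: line_nd.
rewrite xpair_eqE mulf_pair_eq0 // /t mulf_eq0 invr_eq0.
by rewrite (negbTE (mulf_neq0 (mulf_neq0 two_neq0 d1) d2)) orbF.
Qed.

Lemma ldet_neq0_origin l l1 l2 : lc l = 0 ->
  lc l1 * ldet l l2 + lc l2 * ldet l l1 = 0 ->
  ~ same_line l l1 -> ~ (parallel l l1 /\ parallel l l2) -> ldet l l1 != 0.
Proof.
move=> c0 S0 ns npar; apply/eqP => d1; apply: ns.
have d2 : ldet l l2 != 0 by apply/eqP => d2; apply: npar; rewrite !parallelE d1 d2.
have c1 : lc l1 = 0.
  by move/eqP: S0; rewrite d1 mulr0 addr0 mulf_eq0 (negbTE d2) orbF => /eqP.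
apply/same_lineE; apply: (parallel_common_coef (P := (0, 0))) d1 _ _;
  by rewrite /on_line ?c0 ?c1 !mulr0 !addr0.
Qed.

End Lines.

Section OppositeSides.
Variables (K : fieldType) (B B' : line K).
Hypotheses (two_neq0 : (2%:R : K) != 0)
  (B_la : la B != 0) (B_lb : lb B != 0) (B'_la : la B' != 0) (B'_lb : lb B' != 0).
Implicit Types (l : line K) (p q : K).

(* The centroid of a quadrilateral in standard form, whose vertices on the axes are
   (- lc / la, 0) and (0, - lc / lb) for B and for B'. *)
Definition cx : K := - (lc B / la B + lc B' / la B') / 4%:R.
Definition cy : K := - (lc B / lb B + lc B' / lb B') / 4%:R.
Definition conic (p q : K) : K :=
  q * (q - 2%:R * cy) - slope B * slope B' * p * (p - 2%:R * cx).

Lemma conic_parallelE p q : q * lb B = la B * p ->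
  (conic p q == 0) = on_line B (0, 2%:R * q) || (q * lb B' == la B' * p).
Proof.
move=> par; have four_neq0 := four_neq0 two_neq0.
have -> : conic p q = ((la B * 0 + lb B * (2%:R * q) + lc B) * (q * lb B' - la B' * p)
    + (q * lb B - la B * p) * (2%:R * la B' * p + lc B')) / (2%:R * lb B * lb B').
  by rewrite /conic /cx /cy /slope; field_nz.
rewrite par subrr mul0r addr0 mulf_eq0 invr_eq0.
by rewrite (negbTE (mulf_neq0 (mulf_neq0 two_neq0 B_lb) B'_lb)) orbF mulf_eq0 subr_eq0.
Qed.

Lemma conic_eq0_same l p q : (p, q) != (0, 0) -> axes_line l p q ->
  same_line l B -> conic p q = 0.
Proof.
move=> pq0 hl same; have hB : axes_line B p q by move=> P; rewrite -same.
apply/eqP; rewrite conic_parallelE; last first.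
  by apply/eqP; rewrite -(ldet_axes _ pq0 hB) /ldet subrr.
by rewrite hB /=; apply/orP; left; apply/eqP; ring.
Qed.

Lemma conic_eq0_parallel l p q : (p, q) != (0, 0) -> axes_line l p q ->
  parallel l B -> parallel l B' -> conic p q = 0.
Proof.
move=> pq0 hl; rewrite !parallelE !(ldet_axes _ pq0 hl) => /eqP pB pB'.
by apply/eqP; rewrite conic_parallelE // pB' orbT.
Qed.

Lemma ldet_neq0_axes l p q : (p, q) != (0, 0) -> axes_line l p q ->
  conic p q = 0 -> ~ same_line l B -> ~ (parallel l B /\ parallel l B') ->
  ldet l B != 0.
Proof.
move=> pq0 hl c0 nsB npar; apply/negP => d1.
have pB : q * lb B == la B * p by rewrite -(ldet_axes _ pq0 hl).
move/eqP: c0; rewrite (conic_parallelE (eqP pB)) => /orP[oB | pB'].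
  have hB := axes_line_parallel two_neq0 pq0 (eqP pB) oB.
  by apply: nsB => P; rewrite hl hB.
by apply: npar; rewrite !parallelE d1 (ldet_axes _ pq0 hl) pB'.
Qed.

Lemma midpt_meet_axes l p q : (p, q) != (0, 0) -> axes_line l p q ->
  ldet l B != 0 -> ldet l B' != 0 ->
  (midpt (meet l B) (meet l B') == (p, q)) = (conic p q == 0).
Proof.
move=> pq0 hl d1 d2; have [r r0 [pE qE cE]] := axes_line_coef pq0 hl.
have four_neq0 := four_neq0 two_neq0.
set t := lb B * lb B' * conic p q / (r ^+ 2 * ldet l B * ldet l B').
have -> : midpt (meet l B) (meet l B') = (p + p * t, q + - q * t).
  move: d1 d2; rewrite /midpt /meet /t /conic /cx /cy /slope /ldet pE qE cE /= => d1 d2.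
  by congr pair; field_nz.
have qp0 : (p != 0) || (- q != 0) by rewrite oppr_eq0 -pair_neq0.
rewrite addr_pair_eq //.
have den : r ^+ 2 * ldet l B * ldet l B' != 0 by rewrite !mulf_neq0 ?expf_neq0.
by rewrite /t mulf_eq0 invr_eq0 (negbTE den) orbF mulf_eq0 (negbTE (mulf_neq0 B_lb B'_lb)).
Qed.

Lemma origin_polar_eq0 l : (slope B * slope B' * cx * lb l == cy * la l) =
  (lc B * ldet l B' + lc B' * ldet l B == 0).
Proof.
have four_neq0 := four_neq0 two_neq0.
have -> : lc B * ldet l B' + lc B' * ldet l B =
    4%:R * lb B * lb B' * (slope B * slope B' * cx * lb l - cy * la l).
  by rewrite /cx /cy /slope /ldet; field_nz.
by rewrite mulf_eq0 (negbTE (mulf_neq0 (mulf_neq0 four_neq0 B_lb) B'_lb)) subr_eq0.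
Qed.

End OppositeSides.

Lemma conicC (K : fieldType) (B B' : line K) p q : conic B B' p q = conic B' B p q.
Proof. by rewrite /conic /cx /cy /slope; ring. Qed.

Section StandardQuadrilateral.
Variables (K : fieldType) (A B A' B' : line K).
Hypotheses (two_neq0 : (2%:R : K) != 0)
  (A_la : la A = 0) (A_lc : lc A = 0) (A'_lb : lb A' = 0) (A'_lc : lc A' = 0)
  (B_la : la B != 0) (B_lb : lb B != 0) (B'_la : la B' != 0) (B'_lb : lb B' != 0).
Implicit Types (l : line K) (p q : K).

Lemma A_lb : lb A != 0.
Proof. by move: (line_nd A); rewrite A_la eqxx. Qed.

Lemma A'_la : la A' != 0.
Proof. by move: (line_nd A'); rewrite A'_lb eqxx orbF. Qed.

Lemma on_lineA P : on_line A P = (P.2 == 0).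
Proof. by rewrite /on_line A_la A_lc mul0r add0r addr0 mulf_eq0 (negbTE A_lb). Qed.

Lemma on_lineA' P : on_line A' P = (P.1 == 0).
Proof. by rewrite /on_line A'_lb A'_lc mul0r !addr0 mulf_eq0 (negbTE A'_la). Qed.

Lemma parallelA l : parallel l A = (la l == 0).
Proof. by rewrite /parallel A_la mul0r mulf_eq0 (negbTE A_lb) orbF. Qed.

Lemma parallelA' l : parallel l A' = (lb l == 0).
Proof. by rewrite /parallel A'_lb mulr0 eq_sym mulf_eq0 (negbTE A'_la). Qed.

Lemma same_lineA l : same_line l A <-> la l = 0 /\ lc l = 0.
Proof.
split=> [same | [a0 c0] P]; last first.
  have b0 : lb l != 0 by move: (line_nd l); rewrite a0 eqxx.
  by rewrite on_lineA /on_line a0 c0 mul0r add0r addr0 mulf_eq0 (negbTE b0).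
have := same (0, 0); have := same (1, 0).
rewrite !on_lineA /on_line /= !mulr0 mulr1 !addr0 add0r eqxx => /eqP e1 /eqP c0.
by split=> //; rewrite -e1 c0 addr0.
Qed.

Lemma same_lineA' l : same_line l A' <-> lb l = 0 /\ lc l = 0.
Proof.
split=> [same | [b0 c0] P]; last first.
  have a0 : la l != 0 by move: (line_nd l); rewrite b0 eqxx orbF.
  by rewrite on_lineA' /on_line b0 c0 mul0r !addr0 mulf_eq0 (negbTE a0).
have := same (0, 0); have := same (0, 1).
rewrite !on_lineA' /on_line /= !mulr0 mulr1 !add0r eqxx => /eqP e1 /eqP c0.
by split=> //; rewrite -e1 c0 addr0.
Qed.

Lemma crossesAA l :
  crosses l A A' <-> ~ (la l = 0 /\ lc l = 0) /\ ~ (lb l = 0 /\ lc l = 0).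
Proof.
rewrite /crosses -same_lineA -same_lineA'.
split=> [[nA [nA' _]] | [nA nA']] //; do 2!split=> //.
rewrite parallelA parallelA' => -[/eqP a0 /eqP b0].
by move: (line_nd l); rewrite a0 b0 eqxx.
Qed.

Lemma crosses_AA_or_BB l : crosses l A A' \/ crosses l B B'.
Proof.
have [a0 | a0] := eqVneq (la l) 0.
  have b0 : lb l != 0 by move: (line_nd l); rewrite a0 eqxx.
  right; split; [|split].
  - by case/same_lineE=> r _ [ea _ _]; move: B_la; rewrite ea a0 mulr0 eqxx.
  - by case/same_lineE=> r _ [ea _ _]; move: B'_la; rewrite ea a0 mulr0 eqxx.
  - by rewrite /parallel a0 !mul0r eq_sym mulf_eq0 (negbTE B_la) (negbTE b0) => -[].
have [b0 | b0] := eqVneq (lb l) 0.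
  right; split; [|split].
  - by case/same_lineE=> r _ [_ eb _]; move: B_lb; rewrite eb b0 mulr0 eqxx.
  - by case/same_lineE=> r _ [_ eb _]; move: B'_lb; rewrite eb b0 mulr0 eqxx.
  - by rewrite /parallel b0 !mulr0 mulf_eq0 (negbTE B_lb) (negbTE a0) => -[].
by left; apply/crossesAA; split=> -[e _]; [move: a0 | move: b0]; rewrite e eqxx.
Qed.

Lemma mid_pairAA l p q : mid_pair l A A' (Some (p, q)) <->
  [/\ la l != 0, lb l != 0, on_line l (2%:R * p, 0) & on_line l (0, 2%:R * q)].
Proof.
rewrite /mid_pair parallelA parallelA'.
have [a0 | a0] /= := eqVneq (la l) 0; first by split=> // -[].
have [b0 | b0] /= := eqVneq (lb l) 0; first by split=> // -[].
split=> [[[x1 y1] [[x2 y2] [o1 a1 o2 a2 [pE qE]]]] | [_ _ o1 o2]].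
  move: a1 a2; rewrite on_lineA on_lineA' /= => /eqP y0 /eqP x0.
  have -> : 2%:R * p = x1 by rewrite pE x0 addr0 mulrC divfK.
  have -> : 2%:R * q = y2 by rewrite qE y0 add0r mulrC divfK.
  by rewrite y0 in o1; rewrite x0 in o2; split.
exists (2%:R * p, 0), (0, 2%:R * q); split; rewrite ?on_lineA ?on_lineA' //.
by rewrite /midpt /=; congr (Some (_, _)); field.
Qed.

Lemma bisector_axes l p q : bisector_mid A B A' B' l (Some (p, q)) ->
  on_line l (2%:R * p, 0) /\ on_line l (0, 2%:R * q).
Proof.
case=> _ hAA hBB; case: (classic (crosses l A A')) => [/hAA/mid_pairAA[] // | nAA].
have cBB : crosses l B B' by case: (crosses_AA_or_BB l).
have := mid_pair_on two_neq0 (hBB cBB).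
case: (not_crosses nAA) => [/same_lineA[a0 c0] | /same_lineA'[b0 c0] | [pA pA']].
- have b0 : lb l != 0 by move: (line_nd l); rewrite a0 eqxx.
  rewrite /on_line a0 c0 /= mul0r add0r addr0 mulf_eq0 (negbTE b0) => /eqP ->.
  by rewrite !(mul0r, mulr0, addr0).
- have a0 : la l != 0 by move: (line_nd l); rewrite b0 eqxx orbF.
  rewrite /on_line b0 c0 /= mul0r !addr0 mulf_eq0 (negbTE a0) => /eqP ->.
  by rewrite !(mul0r, mulr0, addr0).
- by move: pA pA' (line_nd l); rewrite parallelA parallelA' => /eqP-> /eqP->; rewrite eqxx.
Qed.

Lemma bisector_axesE l p q : (p, q) != (0, 0) ->
  bisector_mid A B A' B' l (Some (p, q)) <-> conic B B' p q = 0 /\ axes_line l p q.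
Proof.
move=> pq0; split=> [bis | [c0 hl]].
  have hl : axes_line l p q by apply/(axes_lineP _ two_neq0 pq0); exact: bisector_axes bis.
  split=> //; case: bis => _ _ hBB.
  case: (classic (crosses l B B')) =>
    [/hBB/mid_pairE[d1 d2 mid] | /not_crosses[sB | sB' | [pB pB']]].
  - by apply/eqP; rewrite -(midpt_meet_axes two_neq0 B_la B_lb B'_la B'_lb pq0 hl d1 d2) -mid.
  - exact: (conic_eq0_same two_neq0 B_la B_lb B'_la B'_lb pq0 hl sB).
  - by rewrite conicC; exact: (conic_eq0_same two_neq0 B'_la B'_lb B_la B_lb pq0 hl sB').
  - exact: (conic_eq0_parallel two_neq0 B_la B_lb B'_la B'_lb pq0 hl pB pB').
have [r r0 [_ _ cE]] := axes_line_coef pq0 hl.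
split.
- exact: crosses_AA_or_BB.
- case/crossesAA=> nA nA'; have [o1 o2] := (axes_lineP _ two_neq0 pq0).1 hl.
  apply/mid_pairAA; split=> //; apply/eqP=> e0; [apply: nA | apply: nA'];
    by split=> //; rewrite cE e0; ring.
- case=> nsB [nsB' npar].
  have d1 := ldet_neq0_axes two_neq0 B_la B_lb B'_la B'_lb pq0 hl c0 nsB npar.
  have d2 : ldet l B' != 0.
    apply: (ldet_neq0_axes two_neq0 B'_la B'_lb B_la B_lb pq0 hl _ nsB').
      by rewrite conicC.
    by case=> pB' pB; apply: npar.
  apply/mid_pairE; split=> //; apply: esym; apply/eqP.
  by rewrite (midpt_meet_axes two_neq0 B_la B_lb B'_la B'_lb pq0 hl d1 d2) c0.
Qed.

Lemma bisector_originE l : bisector_mid A B A' B' l (Some (0, 0)) <->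
  lc l = 0 /\ slope B * slope B' * cx B B' * lb l = cy B B' * la l.
Proof.
have polarE := origin_polar_eq0 two_neq0 B_la B_lb B'_la B'_lb l.
split=> [bis | [c0 /eqP]]; last rewrite polarE => /eqP S0.
  have c0 : lc l = 0.
    by have [+ _] := bisector_axes bis; rewrite /on_line /= !mulr0 !add0r => /eqP.
  split=> //; apply/eqP; rewrite polarE; case: bis => _ _ hBB.
  case: (classic (crosses l B B')) =>
    [/hBB/mid_pairE[d1 d2 mid] | /not_crosses[sB | sB' | [pB pB']]].
  - by rewrite -midpt_meet_origin // -mid.
  - case/same_lineE: (sB) => r _ [_ _ ->].
    by rewrite (same_line_ldet sB) c0 !(mulr0, mul0r) addr0.
  - case/same_lineE: (sB') => r _ [_ _ ->].
    by rewrite (same_line_ldet sB') c0 !(mulr0, mul0r) addr0.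
  - by move: pB pB'; rewrite !parallelE => /eqP-> /eqP->; rewrite !mulr0 addr0.
split.
- exact: crosses_AA_or_BB.
- case/crossesAA=> nA nA'; apply/mid_pairAA.
  rewrite !mulr0 /on_line c0 !mulr0 !addr0 eqxx.
  by split=> //; apply/eqP=> e0; [apply: nA | apply: nA'].
- case=> nsB [nsB' npar].
  have d1 := ldet_neq0_origin c0 S0 nsB npar.
  have d2 : ldet l B' != 0.
    apply: (ldet_neq0_origin (l2 := B) c0 _ nsB'); first by rewrite addrC.
    by case=> pB' pB; apply: npar.
  apply/mid_pairE; split=> //; apply: esym; apply/eqP.
  by rewrite midpt_meet_origin // S0.
Qed.

Lemma centroidE h k : centroid A B A' B' (h, k) -> h = cx B B' /\ k = cy B B'.
Proof.
case=> -[x1 y1] [[x2 y2] [[x3 y3] [[x4 y4] [[a1 b1] [b2 a2] [a3 b3] [b4 a4] [-> ->]]]]].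
move: a1 a2 a3 a4; rewrite !on_lineA !on_lineA' /= => /eqP y1_0 /eqP x2_0 /eqP x3_0 /eqP y4_0.
subst y1 x2 x3 y4.
rewrite (on_line_x_axis B_la b1) (on_line_y_axis B_lb b2).
rewrite (on_line_y_axis B'_lb b3) (on_line_x_axis B'_la b4) /cx /cy.
by split; ring.
Qed.

End StandardQuadrilateral.

Lemma standard_form_coef (K : fieldType) (A B A' B' : line K) :
  standard_form A B A' B' -> [/\ la A = 0, lc A = 0, lb A' = 0 & lc A' = 0].
Proof.
case=> onA onA'.
have := onA (0, 0); have := onA (1, 0); have := onA' (0, 0); have := onA' (0, 1).
rewrite /on_line /= !mulr0 !mulr1 !addr0 !add0r eqxx => /eqP b' /eqP c' /eqP a /eqP c.
by split=> //; [move: a; rewrite c | move: b'; rewrite c']; rewrite addr0.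
Qed.

Lemma is_quad_coef (K : fieldType) (A B A' B' : line K) : la A = 0 -> lb A' = 0 ->
  is_quad A B A' B' -> [/\ la B != 0, lb B != 0, la B' != 0 & lb B' != 0].
Proof.
move=> A_la A'_lb [_ [_ [_ [pAB pBA' pA'B' pB'A]]]].
move: pAB pBA' pA'B' pB'A; rewrite /parallel A_la A'_lb !(mul0r, mulr0) !(eq_sym 0).
by rewrite !mulf_eq0 !negb_or => /andP[-> _] /andP[_ ->] /andP[_ ->] /andP[-> _].
Qed.

Theorem proposition4p4 (K : fieldType) (hK : (2%:R : K) != 0)
  (A B A' B' : line K) (h k mu : K) :
  is_quad A B A' B' -> standard_form A B A' B' ->
  centroid A B A' B' (h, k) ->
  mu = slope B * slope B' ->
  [/\ (* (1) *)
      (forall (l : line K) (p q : K), (p, q) != (0, 0) ->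
         (bisector_mid A B A' B' l (Some (p, q)) <->
          q * (q - 2%:R * k) - mu * p * (p - 2%:R * h) = 0 /\
          (forall P : point K,
             on_line l P = (q * P.1 + p * P.2 - 2%:R * p * q == 0)))),
      (* (2) *)
      ((h, k) = (0, 0) ->
         forall l : line K, on_line l (0, 0) ->
           bisector_mid A B A' B' l (Some (0, 0)))
    & (* (3) *)
      ((h, k) != (0, 0) ->
         forall l : line K,
           bisector_mid A B A' B' l (Some (0, 0)) <->
           (forall P : point K, on_line l P = (k * P.2 + mu * h * P.1 == 0)))].
Proof.
move=> quad std cen ->.
have [A_la A_lc A'_lb A'_lc] := standard_form_coef std.
have [B_la B_lb B'_la B'_lb] := is_quad_coef A_la A'_lb quad.
have [-> ->] := centroidE A_la A_lc A'_lb A'_lc B_la B_lb B'_la B'_lb cen.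
have bisE := bisector_originE hK A_la A_lc A'_lb A'_lc B_la B_lb B'_la B'_lb.
split=> [l p q | [h0 k0] l | hk0 l].
- exact: (bisector_axesE hK A_la A_lc A'_lb A'_lc B_la B_lb B'_la B'_lb).
- rewrite /on_line !mulr0 !add0r => /eqP c0.
  by apply/bisE; rewrite h0 k0 mulr0 !mul0r.
- have ab0 : (slope B * slope B' * cx B B' != 0) || (cy B B' != 0).
    have s0 := mulf_neq0 (slope_neq0 B_la B_lb) (slope_neq0 B'_la B'_lb).
    by move: hk0; rewrite pair_neq0 => /orP[/(mulf_neq0 s0) -> | ->]; rewrite ?orbT.
  rewrite bisE (line_through0P _ ab0).
  by split=> eqn P; rewrite eqn addrC.
Qed.
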